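(* Let $G$ be a finite group and let $M,N$ be normal subgroups with $1<M\le N<G$ such that every $g\in G\setminus N$ is conjugate in $G$ to every element of $gM$. If $x\in G\setminus N$ has order $m$ and $y\in C_M(x)$, then the order of $y$ divides $m$. *)

From mathcomp Require Import all_boot all_fingroup.

From mathcomp Require Import all_boot all_fingroup all_solvable.
Set Implicit Arguments.
Unset Strict Implicit.
Local Open Scope group_scope.

(* Since [y] centralises [x], the element [x * y] lies in the coset [x M], so it
   is conjugate to [x] and has the same order [m]; expanding the commuting power
   [(x y)^m = x^m y^m] then gives [y^m = 1]. *)

Lemma order_dvdn_commute_mul (gT : finGroupType) (x y : gT) :
  commute x y -> #[x * y] = #[x] -> (#[y] %| #[x])%N.
Proof.
move=> cxy oxy; rewrite order_dvdn; apply/eqP.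
have : (x * y) ^+ #[x] = 1 by rewrite -oxy expg_order.
by rewrite expgMn // expg_order mul1g.
Qed.

Lemma order_conjg_class (gT : finGroupType) (G : {set gT}) (g h : gT) :
  h \in g ^: G -> #[h] = #[g].
Proof. by case/imsetP=> z _ ->; rewrite orderJ. Qed.

Theorem mainTheorem12 (gT : finGroupType) (G M N : {group gT}) :
  M <| G -> N <| G ->
  [1 gT] \proper M -> M \subset N -> N \proper G ->
  (forall g, g \in G :\: N -> forall h, h \in g *: M -> h \in g ^: G) ->
  forall x y, x \in G :\: N -> y \in 'C_M[x] -> (#[y] %| #[x])%N.
Proof.
move=> _ _ _ _ _ cosetG x y xGN /setIP[yM /cent1P cxy].
have xyM : x * y \in x *: M by rewrite mem_lcoset mulKg.
apply: (order_dvdn_commute_mul (commute_sym cxy)).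
exact: order_conjg_class (cosetG x xGN _ xyM).
Qed.
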